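(* For every level $t \in \mathcal{L}$ there exist $u_1, \ldots, u_n \in \mathcal{L}_s$ (with $n \ge 0$) such that $t =_{\mathcal{L}} \max(u_1, \ldots, u_n)$.
   Context: $\operatorname{imax}\colon \mathbb{N}\times\mathbb{N}\to\mathbb{N}$ is defined by $\operatorname{imax}(i,0)=0$ and $\operatorname{imax}(i,j+1)=\max(i,j+1)$. Levels are terms of the grammar $t ::= x \mid 0 \mid s(t) \mid \max(t,t) \mid \operatorname{imax}(t,t)$, with $x$ in a countable set of variables $\mathcal{X}$; $\mathcal{L}$ is the set of levels. A valuation is $\sigma\colon\mathcal{X}\to\mathbb{N}$; values are $[0]_\sigma=0$, $[x]_\sigma=\sigma(x)$, $[s(t)]_\sigma=[t]_\sigma+1$, $[\max(t_1,t_2)]_\sigma=\max([t_1]_\sigma,[t_2]_\sigma)$, $[\operatorname{imax}(t_1,t_2)]_\sigma=\operatorname{imax}([t_1]_\sigma,[t_2]_\sigma)$. Sublevels: for finite $E\subseteq\mathcal{X}$, $x\in\mathcal{X}$, $S\in\mathbb{N}$, $[A(E,x,S)]_\sigma$ is $0$ if some $y\in E$ has $\sigma(y)=0$ and $\sigma(x)+S$ otherwise; $[B(E,S)]_\sigma$ is $0$ if some $y\in E$ has $\sigma(y)=0$ and $S$ otherwise. $\mathcal{L}_s$ is the set of sublevels $A(E,x,S)$ with $x \in E$ and $B(E,S)$ with $S > 0$. $\max$ of a finite list is evaluated pointwise, with $\max()$ (empty) having value $0$. $t_1 =_{\mathcal{L}} t_2$ means $[t_1]_\sigma=[t_2]_\sigma$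 for all valuations $\sigma$. *)

From Stdlib Require Import Arith List.
Import ListNotations.

Definition var := nat.

Definition imax (i j : nat) : nat :=
  match j with 0 => 0 | S _ => Nat.max i j end.

Inductive level : Type :=
| LVar : var -> level
| LZero : level
| LSucc : level -> level
| LMax : level -> level -> level
| LIMax : level -> level -> level.

Definition valuation := var -> nat.

Fixpoint eval (s : valuation) (t : level) : nat :=
  match t with
  | LVar x => s x
  | LZero => 0
  | LSucc t => S (eval s t)
  | LMax a b => Nat.max (eval s a) (eval s b)
  | LIMax a b => imax (eval s a) (eval s b)
  end.

(* Sublevels A(E,x,S) and B(E,S); a finite set E of variables is given as a list. *)
Inductive sublevel : Type :=
| SubA : list var -> var -> nat -> sublevel
| SubB : list var -> nat -> sublevel.

Definition some_zero (s : valuation) (E : list var) : Prop :=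
  exists y, In y E /\ s y = 0.

Definition some_zerob (s : valuation) (E : list var) : bool :=
  existsb (fun y => Nat.eqb (s y) 0) E.

Definition eval_sub (s : valuation) (u : sublevel) : nat :=
  match u with
  | SubA E x k => if some_zerob s E then 0 else s x + k
  | SubB E k => if some_zerob s E then 0 else k
  end.

Definition in_Ls (u : sublevel) : Prop :=
  match u with
  | SubA E x _ => In x E
  | SubB _ k => 0 < k
  end.

Definition eval_max_sub (s : valuation) (us : list sublevel) : nat :=
  fold_right (fun u acc => Nat.max (eval_sub s u) acc) 0 us.

(* Each construct acts on a list of sublevels: max is
   concatenation, s(-) raises every offset by one (plus the constant B(∅,1),
   which only matters when all sublevels vanish), and imax(a, b) is
   max(b, max_{v,u} v ∧ u) where v ranges over b's sublevels, u over a's, and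
   v ∧ u is u with v's guard added. The conjunction is correct because a
   sublevel of L_s vanishes exactly when its guard contains a zero variable. *)

From Stdlib Require Import List Arith Lia.
Import ListNotations.

Definition guard (u : sublevel) : list var :=
  match u with SubA E _ _ => E | SubB E _ => E end.

Definition add_guard (F : list var) (u : sublevel) : sublevel :=
  match u with
  | SubA E x k => SubA (F ++ E) x k
  | SubB E k => SubB (F ++ E) k
  end.

Definition succ_sub (u : sublevel) : sublevel :=
  match u with SubA E x k => SubA E x (S k) | SubB E k => SubB E (S k) end.

Definition succ_pos (n : nat) : nat := match n with 0 => 0 | S _ => S n end.

Fixpoint decomp (t : level) : list sublevel :=
  match t with
  | LVar x => [SubA [x] x 0]
  | LZero => []
  | LSucc t => SubB [] 1 :: map succ_sub (decomp t)
  | LMax a b => decomp a ++ decomp b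
  | LIMax a b =>
      decomp b ++ flat_map (fun v => map (add_guard (guard v)) (decomp a)) (decomp b)
  end.

Lemma some_zerob_app s F E :
  some_zerob s (F ++ E) = orb (some_zerob s F) (some_zerob s E).
Proof. apply existsb_app. Qed.

Lemma some_zerob_false_pos s E x :
  some_zerob s E = false -> In x E -> 0 < s x.
Proof.
  intros Hz Hx. destruct (s x) eqn:Hsx; [|lia].
  assert (some_zerob s E = true) by (apply existsb_exists; exists x; rewrite Hsx; auto).
  congruence.
Qed.

Lemma eval_sub_eq0 s u :
  in_Ls u -> (eval_sub s u =? 0) = some_zerob s (guard u).
Proof.
  destruct u as [E x k | E k]; simpl; intros Hu;
    destruct (some_zerob s E) eqn:Hz; trivial; apply Nat.eqb_neq.
  - pose proof (some_zerob_false_pos s E x Hz Hu). lia.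
  - lia.
Qed.

Lemma eval_add_guard s F u :
  eval_sub s (add_guard F u) = if some_zerob s F then 0 else eval_sub s u.
Proof.
  destruct u; simpl; rewrite some_zerob_app; destruct (some_zerob s F); reflexivity.
Qed.

Lemma eval_succ_sub s u :
  in_Ls u -> eval_sub s (succ_sub u) = succ_pos (eval_sub s u).
Proof.
  intros Hu. pose proof (eval_sub_eq0 s u Hu) as Heq0.
  destruct u as [E x k | E k]; simpl in *; destruct (some_zerob s E); trivial.
  - destruct (s x + k) eqn:Hv; [discriminate|]. simpl. lia.
  - destruct k; [discriminate|]. reflexivity.
Qed.

Lemma in_Ls_add_guard F u : in_Ls u -> in_Ls (add_guard F u).
Proof. destruct u; simpl; auto using in_or_app. Qed.

Lemma in_Ls_succ_sub u : in_Ls u -> in_Ls (succ_sub u).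
Proof. destruct u; simpl; auto with arith. Qed.

Lemma eval_max_sub_app s us vs :
  eval_max_sub s (us ++ vs) = Nat.max (eval_max_sub s us) (eval_max_sub s vs).
Proof. induction us as [|u us IH]; simpl; [|rewrite IH]; lia. Qed.

Lemma eval_max_sub_add_guard s F us :
  eval_max_sub s (map (add_guard F) us)
  = if some_zerob s F then 0 else eval_max_sub s us.
Proof.
  induction us as [|u us IH]; simpl.
  - destruct (some_zerob s F); reflexivity.
  - rewrite IH, eval_add_guard. destruct (some_zerob s F); reflexivity.
Qed.

Lemma eval_max_sub_guarded s us vs :
  Forall in_Ls vs ->
  eval_max_sub s (flat_map (fun v => map (add_guard (guard v)) us) vs)
  = if eval_max_sub s vs =? 0 then 0 else eval_max_sub s us.
Proof.
  induction 1 as [|v vs Hv _ IH]; simpl; trivial.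
  rewrite eval_max_sub_app, eval_max_sub_add_guard, IH, <- (eval_sub_eq0 s v Hv).
  destruct (eval_sub s v); simpl; [reflexivity|].
  destruct (eval_max_sub s vs); simpl; [|destruct (_ =? 0)]; lia.
Qed.

Lemma succ_pos_max a b : succ_pos (Nat.max a b) = Nat.max (succ_pos a) (succ_pos b).
Proof. destruct a, b; simpl; lia. Qed.

Lemma eval_max_sub_succ s us :
  Forall in_Ls us -> eval_max_sub s (map succ_sub us) = succ_pos (eval_max_sub s us).
Proof.
  induction 1 as [|u us Hu _ IH]; simpl; trivial.
  now rewrite IH, eval_succ_sub, succ_pos_max.
Qed.

Lemma decomp_in_Ls t : Forall in_Ls (decomp t).
Proof.
  induction t as [x| |t IH|a IHa b IHb|a IHa b IHb]; simpl.
  - repeat constructor.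
  - constructor.
  - constructor; [simpl; lia|].
    apply Forall_map. eapply Forall_impl; [apply in_Ls_succ_sub|exact IH].
  - now apply Forall_app.
  - apply Forall_app. split; [exact IHb|].
    apply Forall_flat_map, Forall_forall. intros v _.
    apply Forall_map. eapply Forall_impl; [apply in_Ls_add_guard|exact IHa].
Qed.

Lemma eval_decomp s t : eval s t = eval_max_sub s (decomp t).
Proof.
  induction t as [x| |t IH|a IHa b IHb|a IHa b IHb]; simpl.
  - unfold some_zerob. simpl. destruct (s x); simpl; lia.
  - reflexivity.
  - rewrite eval_max_sub_succ, IH by apply decomp_in_Ls.
    destruct (eval_max_sub s (decomp t)); simpl; lia.
  - now rewrite eval_max_sub_app, IHa, IHb.
  - rewrite eval_max_sub_app, eval_max_sub_guarded, IHa, IHb by apply decomp_in_Ls.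
    unfold imax. destruct (eval_max_sub s (decomp b)); simpl; [reflexivity|].
    destruct (eval_max_sub s (decomp a)); simpl; lia.
Qed.

Theorem theorem26 :
  forall t : level,
  exists us : list sublevel,
    (forall u, In u us -> in_Ls u) /\
    (forall s : valuation, eval s t = eval_max_sub s us).
Proof.
  intros t. exists (decomp t). split.
  - apply Forall_forall, decomp_in_Ls.
  - intros s. apply eval_decomp.
Qed.
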